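(* Let $m,r$ be integers with $m>1$, $r>2$. Every numerical semigroup $S\in\mathcal{MA}(m,r)$ has exactly $\left\lfloor\frac{\mathrm{F}(S)-\mathrm{M}(S)}{m}\right\rfloor+1$ children in the graph $G(\mathcal{MA}(m,r))$.
   Context: $\mathbb{N}=\{0,1,2,\ldots\}$. A numerical semigroup is a subset $S\subseteq\mathbb{N}$ closed under addition, containing $0$, with finite complement; $\mathrm{msg}(S)=\{n_1<\cdots<n_e\}$ is its unique finite minimal system of generators, $\mathrm{m}(S)=n_1$, $\mathrm{r}(S)=n_2$, $\mathrm{M}(S)=n_e$; $\mathrm{F}(S)$ is the largest integer not in $S$. $S$ is a MANS-semigroup if $w(1)<\cdots<w(\mathrm{m}(S)-1)$, where $w(i)$ is the least element of $S$ congruent to $i$ modulo $\mathrm{m}(S)$. $\mathcal{MA}(m,r)$ is the set of MANS-semigroups $S$ with $\mathrm{m}(S)=m$ and $\mathrm{r}(S)=r$. $G(\mathcal{MA}(m,r))$ is the directed graph with vertex set $\mathcal{MA}(m,r)$ in which $(T,S)$ is an edge iff $\mathrm{msg}(S)=\mathrm{msg}(T)\setminus\{\mathrm{M}(T)\}$; in that case $T$ is a child of $S$. *)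

From mathcomp Require Import all_boot all_order all_algebra.
Set Implicit Arguments. Unset Strict Implicit. Unset Printing Implicit Defensive.

Definition numsg (S : pred nat) : Prop :=
  S 0 /\ (forall a b, S a -> S b -> S (a + b)) /\ (exists N, forall n, N <= n -> S n).

Definition is_msg (S : pred nat) (x : nat) : Prop :=
  S x /\ 0 < x /\ ~ (exists a b, 0 < a /\ 0 < b /\ S a /\ S b /\ a + b = x).

Definition is_mult (S : pred nat) (m : nat) : Prop :=
  is_msg S m /\ (forall x, is_msg S x -> m <= x).

Definition is_r (S : pred nat) (r : nat) : Prop :=
  is_msg S r /\ (exists m, is_mult S m /\ m < r) /\
  (forall x, is_msg S x -> x < r -> is_mult S x).

Definition is_M (S : pred nat) (M : nat) : Prop :=
  is_msg S M /\ (forall x, is_msg S x -> x <= M).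

(* f = F(S): the Frobenius number, largest integer not in S (here f : nat,
   used only when S <> N). *)
Definition is_F (S : pred nat) (f : nat) : Prop :=
  ~~ S f /\ (forall n, f < n -> S n).

Definition is_w (S : pred nat) (m i w : nat) : Prop :=
  S w /\ w = i %[mod m] /\ (forall n, S n -> n = i %[mod m] -> w <= n).

Definition MANS (S : pred nat) : Prop :=
  forall m, is_mult S m ->
  forall i j wi wj, 0 < i -> i < j -> j < m ->
    is_w S m i wi -> is_w S m j wj -> wi < wj.

Definition in_MA (m r : nat) (S : pred nat) : Prop :=
  numsg S /\ is_mult S m /\ is_r S r /\ MANS S.

(* T is a child of S in G(MA(m,r)): (T,S) is an edge, i.e. T \in MA(m,r)
   and msg(S) = msg(T) \ {M(T)}. *)
Definition child (m r : nat) (S T : pred nat) : Prop :=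
  in_MA m r T /\
  exists MT, is_M T MT /\ (forall x, is_msg S x <-> (is_msg T x /\ x <> MT)).

(* S has exactly k children in G(MA(m,r)), counting semigroups up to
   extensional equality of their membership predicates. *)
Definition has_exactly_children (m r : nat) (S : pred nat) (k : nat) : Prop :=
  exists f : 'I_k -> pred nat,
    (forall i, child m r S (f i)) /\
    (forall i j, (forall n, f i n = f j n) -> i = j) /\
    (forall T, child m r S T -> exists i, forall n, T n = f i n).

(* A numerical semigroup S of multiplicity m is MANS exactly when, inside every
   block [q m, q m + m), its gaps form a final segment of the block.  A child T of S
   is generated by S and x = M(T), where x is a gap of S above M(S); the MANS property
   of T forces x - 1 to lie in S, and conversely every such x yields a child.  These x
   are the first gaps of the blocks that contain a gap, and above M(S) those are the
   blocks with indices M/m, ..., F/m.  Hence S has F/m + 1 - M/m children, which equals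
   floor((F - M)/m) + 1 because F mod m >= M mod m. *)

From mathcomp Require Import all_boot all_order all_algebra.
From mathcomp Require Import zify ring.
From Stdlib Require Import Classical.

Set Implicit Arguments. Unset Strict Implicit. Unset Printing Implicit Defensive.

Section NumericalSemigroup.
Variable S : pred nat.
Hypothesis hS : numsg S.

Lemma numsg0 : S 0.
Proof. exact: hS.1. Qed.

Lemma numsgD a b : S a -> S b -> S (a + b).
Proof. exact: hS.2.1. Qed.

Lemma numsgMn k a : S a -> S (k * a).
Proof.
by move=> Sa; elim: k => [|k IHk]; [exact: numsg0 | rewrite mulSn numsgD].
Qed.

Lemma numsg_modn_up m a b : S a -> S m -> a <= b -> b = a %[mod m] -> S b.
Proof.
move=> Sa Sm le_ab /eqP; rewrite eqn_mod_dvd // => /dvdnP[k def_k].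
by rewrite -(subnK le_ab) def_k addnC numsgD ?numsgMn.
Qed.

Lemma gap_gt0 n : ~~ S n -> 0 < n.
Proof. by rewrite lt0n; apply: contraNneq => ->; apply: numsg0. Qed.

Lemma gap_le_frob F n : is_F S F -> ~~ S n -> n <= F.
Proof. by move=> [_ SF] nSn; rewrite leqNgt; apply: contra nSn => /SF. Qed.

End NumericalSemigroup.

Definition reducible (S : pred nat) (n : nat) : Prop :=
  exists a b, 0 < a /\ 0 < b /\ S a /\ S b /\ a + b = n.

Lemma reducible_sub (S T : pred nat) n :
  (forall k, S k -> T k) -> reducible S n -> reducible T n.
Proof.
move=> sST [a [b [a0 [b0 [Sa [Sb ab]]]]]].
by exists a, b; split; [|split; [|split; [apply: sST|split; [apply: sST|]]]].
Qed.

Lemma reducible_below (S T : pred nat) n :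
  (forall k, k < n -> T k -> S k) -> reducible T n -> reducible S n.
Proof.
move=> sTS [a [b [a0 [b0 [Ta [Tb ab]]]]]].
by exists a, b; split; [|split; [|split; [apply: sTS|split; [apply: sTS|]]]] => //; lia.
Qed.

Lemma not_msg_reducible (S : pred nat) n :
  S n -> 0 < n -> ~ is_msg S n -> reducible S n.
Proof. by move=> Sn n0 not_msg; apply: NNPP => irr; apply: not_msg. Qed.

Lemma msg_induction (S P : pred nat) : P 0 ->
  (forall a b, P a -> P b -> P (a + b)) -> (forall x, is_msg S x -> P x) ->
  forall n, S n -> P n.
Proof.
move=> P0 PD Pmsg; elim/ltn_ind => n IHn Sn.
have [->|n0] := posnP n; first exact: P0.
have [/Pmsg //|not_msg] := classic (is_msg S n).
have [a [b [a0 [b0 [Sa [Sb ab]]]]]] := not_msg_reducible Sn n0 not_msg.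
by rewrite -ab; apply: PD; apply: IHn => //; lia.
Qed.

Lemma is_mult_uniq (S : pred nat) m m' : is_mult S m -> is_mult S m' -> m = m'.
Proof. by move=> [msg_m min_m] [msg_m' min_m']; apply/eqP; rewrite eqn_leq min_m ?min_m'. Qed.

Lemma is_w_exists (S : pred nat) m i : numsg S -> 0 < m -> i < m ->
  exists w, is_w S m i w.
Proof.
move=> [_ [_ [N SN]]] m0 im.
have ex_w : exists n, S n && (n %% m == i).
  exists (N * m + i); rewrite modnMDl modn_small // eqxx andbT SN //.
  exact: leq_trans (leq_pmulr N m0) (leq_addr _ _).
case: (ex_minnP ex_w) => w /andP[Sw /eqP w_mod] w_min.
exists w; split => //; split; first by rewrite w_mod modn_small.
by move=> n Sn n_mod; apply: w_min; rewrite Sn n_mod modn_small ?eqxx.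
Qed.

(* Inside every block [q m, q m + m), the gaps of S form a final segment. *)
Definition block_gap_closed (S : pred nat) (m : nat) : Prop :=
  forall z, ~~ S z -> z.+1 %% m != 0 -> ~~ S z.+1.

Lemma gap_spreads_in_block (S : pred nat) m q i j : block_gap_closed S m ->
  ~~ S (q * m + i) -> i <= j -> j < m -> ~~ S (q * m + j).
Proof.
move=> closed nSi; elim: j => [|j IHj]; first by rewrite leqn0 => /eqP <-.
rewrite leq_eqVlt => /predU1P[<- // | le_ij] lt_jm.
rewrite addnS; apply: closed; first exact: IHj (ltnW lt_jm).
by rewrite -addnS modnMDl modn_small.
Qed.

Lemma MANS_block_gap_closed (S : pred nat) m :
  numsg S -> is_mult S m -> MANS S -> block_gap_closed S m.
Proof.
move=> hS hm mans z nSz z1_mod; apply/negP => Sz1.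
have [[Sm [m0 _]] _] := hm.
set j := z %% m.
have j_lt : j < m by rewrite ltn_pmod.
have j0 : 0 < j.
  by rewrite lt0n; apply: contra nSz => /eqP j0; rewrite (divn_eq z m) -/j j0 addn0 numsgMn.
have z1_modE : z.+1 = j.+1 %[mod m] by rewrite {1}(divn_eq z m) -addnS modnMDl.
have j1_lt : j.+1 < m.
  rewrite ltn_neqAle j_lt andbT; apply: contraNneq z1_mod => j1m.
  by rewrite z1_modE j1m modnn.
have [wj hwj] := is_w_exists hS m0 j_lt.
have [wj1 hwj1] := is_w_exists hS m0 j1_lt.
have lt_w := mans m hm j j.+1 wj wj1 j0 (ltnSn j) j1_lt hwj hwj1.
have [Swj [wj_mod _]] := hwj; have [_ [_ wj1_min]] := hwj1.
have le_wj_z : wj <= z by rewrite -ltnS (leq_trans lt_w) ?wj1_min.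
suff Sz : S z by rewrite Sz in nSz.
apply: (numsg_modn_up hS Swj Sm le_wj_z).
by rewrite wj_mod modn_mod.
Qed.

Lemma block_gap_closed_MANS (S : pred nat) m :
  is_mult S m -> block_gap_closed S m -> MANS S.
Proof.
move=> hm closed m' hm'; rewrite -(is_mult_uniq hm hm').
move=> i j wi wj _ lt_ij lt_jm [_ [_ wi_min]] [Swj [wj_mod _]].
rewrite ltnNge; apply/negP => le_wj_wi.
have wjE : wj = wj %/ m * m + j by rewrite {1}(divn_eq wj m) wj_mod modn_small.
have nSi : ~~ S (wj %/ m * m + i).
  apply/negP => Si.
  have lt_wj : wj %/ m * m + i < wj by rewrite {2}wjE ltn_add2l.
  by move: (wi_min _ Si (modnMDl _ _ _)); rewrite leqNgt (leq_trans lt_wj le_wj_wi).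
by move: (gap_spreads_in_block closed nSi (ltnW lt_ij) lt_jm); rewrite -wjE Swj.
Qed.

Definition child_generator (S : pred nat) (M x : nat) : bool :=
  [&& M < x, ~~ S x & S x.-1].

Section GapsAboveMax.
Variables (S : pred nat) (m M F : nat).
Hypotheses (hS : numsg S) (Sm : S m) (m0 : 0 < m) (SM : S M).
Hypotheses (closed : block_gap_closed S m) (hF : is_F S F).

Lemma gap_gt_of_block y : ~~ S y -> M %/ m <= y %/ m -> M < y.
Proof.
move=> nSy le_q; rewrite ltnNge; apply/negP => le_yM.
have eq_q : y %/ m = M %/ m by apply/eqP; rewrite eqn_leq le_q leq_div2r.
have le_mod : y %% m <= M %% m.
  by move: le_yM; rewrite {1}(divn_eq y m) {1}(divn_eq M m) eq_q leq_add2l.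
have nSy' : ~~ S (M %/ m * m + y %% m) by rewrite -eq_q -divn_eq.
by move: (gap_spreads_in_block closed nSy' le_mod (ltn_pmod M m0)); rewrite -divn_eq SM.
Qed.

Lemma gap_modn_ge y : ~~ S y -> M <= y + m -> M %% m <= y %% m.
Proof.
move=> nSy le_My; rewrite leqNgt; apply/negP => lt_mod.
have le_q : M %/ m <= y %/ m.
  rewrite -ltnS -(ltn_pmul2r m0) mulSn.
  move: le_My lt_mod (divn_eq M m) (divn_eq y m).
  by move: (M %/ m * m) (y %/ m * m) (M %% m) (y %% m); lia.
have SyM : S (y %/ m * m + M %% m).
  apply: (numsg_modn_up hS SM Sm); last by rewrite modnMDl modn_mod.
  by rewrite {1}(divn_eq M m) leq_add2r leq_pmul2r.
have nSy' : ~~ S (y %/ m * m + y %% m) by rewrite -divn_eq.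
by move: (gap_spreads_in_block closed nSy' (ltnW lt_mod) (ltn_pmod M m0)); rewrite SyM.
Qed.

Lemma gap_block_lt x y : S x.-1 -> ~~ S y -> y < x -> y %/ m < x %/ m.
Proof.
move=> Sx1 nSy lt_yx.
rewrite ltn_neqAle (leq_div2r m (ltnW lt_yx)) andbT; apply/eqP => eq_q.
have lt_mod : y %% m < x %% m.
  by move: lt_yx; rewrite {1}(divn_eq x m) {1}(divn_eq y m) eq_q ltn_add2l.
have nSy' : ~~ S (y %/ m * m + y %% m) by rewrite -divn_eq.
have le_mod : y %% m <= (x %% m).-1 by rewrite -ltnS prednK // (leq_ltn_trans _ lt_mod).
have := gap_spreads_in_block closed nSy' le_mod (leq_ltn_trans (leq_pred _) (ltn_pmod x m0)).
have -> : y %/ m * m + (x %% m).-1 = x.-1.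
  have x_mod0 : 0 < x %% m := leq_ltn_trans (leq0n _) lt_mod.
  by rewrite eq_q -subn1 addnBA // subn1 -divn_eq.
by rewrite Sx1.
Qed.

Lemma child_generator_block_inj x y : child_generator S M x ->
  child_generator S M y -> x %/ m = y %/ m -> x = y.
Proof.
move=> /and3P[_ nSx Sx1] /and3P[_ nSy Sy1] eq_q.
case: (ltngtP x y) => [lt_xy|lt_yx|//].
  by move: (gap_block_lt Sy1 nSx lt_xy); rewrite eq_q ltnn.
by move: (gap_block_lt Sx1 nSy lt_yx); rewrite eq_q ltnn.
Qed.

Lemma child_generator_exists b : M %/ m <= b <= F %/ m ->
  exists x, child_generator S M x && (x %/ m == b).
Proof.
move=> /andP[le_Mb le_bF].
set g := b * m + F %% m.
have nSg : ~~ S g.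
  apply: contra hF.1 => Sg.
  by rewrite (divn_eq F m) -(subnK le_bF) mulnDl -addnA addnC numsgD ?numsgMn.
have ex_gap : exists n, ~~ S n && (b * m <= n) by exists g; rewrite nSg leq_addr.
case: (ex_minnP ex_gap) => x /andP[nSx le_bx] x_min.
have le_xg : x <= g by apply: x_min; rewrite nSg leq_addr.
have lt_bx : b * m < x.
  by rewrite ltn_neqAle le_bx andbT; apply: contraNneq nSx => <-; apply: numsgMn.
have xq : x %/ m = b.
  rewrite -(subnKC le_bx) divnMDl // divn_small ?addn0 //.
  by move: le_xg (ltn_pmod F m0); rewrite /g; move: (b * m) (F %% m); lia.
have x0 : 0 < x := leq_ltn_trans (leq0n _) lt_bx.
have Sx1 : S x.-1.
  apply/negPn/negP => nSx1.
  have : x <= x.-1 by apply: x_min; rewrite nSx1 -ltnS prednK.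
  by rewrite leqNgt ltn_predL x0.
by exists x; rewrite /child_generator nSx Sx1 xq eqxx gap_gt_of_block ?xq.
Qed.

Lemma child_generator_block x : child_generator S M x -> M %/ m <= x %/ m <= F %/ m.
Proof.
by move=> /and3P[lt_Mx nSx _]; rewrite !leq_div2r ?(ltnW lt_Mx) ?(gap_le_frob hF nSx).
Qed.

End GapsAboveMax.

Definition adjoin (S : pred nat) (x : nat) : pred nat :=
  fun n => [exists k : 'I_n.+1, (k * x <= n) && S (n - k * x)].

Section Adjoin.
Variables (S : pred nat) (x : nat).
Hypotheses (hS : numsg S) (x0 : 0 < x).

Lemma adjoinP n : reflect (exists2 k, k * x <= n & S (n - k * x)) (adjoin S x n).
Proof.
apply: (iffP existsP) => [[k /andP[]]|[k le_kx Sk]]; first by exists k.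
have lt_kn : k < n.+1 by rewrite ltnS (leq_trans _ le_kx) // leq_pmulr.
by exists (Ordinal lt_kn); rewrite le_kx.
Qed.

Lemma adjoin_sub n : S n -> adjoin S x n.
Proof. by move=> Sn; apply/adjoinP; exists 0; rewrite ?mul0n ?subn0. Qed.

Lemma adjoinMn k : adjoin S x (k * x).
Proof. by apply/adjoinP; exists k; rewrite ?subnn ?numsg0. Qed.

Lemma adjoin_self : adjoin S x x.
Proof. by rewrite -{2}(mul1n x) adjoinMn. Qed.

Lemma adjoinD a b : adjoin S x a -> adjoin S x b -> adjoin S x (a + b).
Proof.
move=> /adjoinP[i le_ia Sa] /adjoinP[j le_jb Sb]; apply/adjoinP; exists (i + j).
  by rewrite mulnDl leq_add.
have -> : a + b - (i + j) * x = (a - i * x) + (b - j * x).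
  by rewrite mulnDl; move: le_ia le_jb; move: (i * x) (j * x); lia.
exact: numsgD.
Qed.

Lemma numsg_adjoin : numsg (adjoin S x).
Proof.
have [_ [_ [N SN]]] := hS.
split; first exact/adjoin_sub/numsg0.
by split; [exact: adjoinD | exists N => n /SN; apply: adjoin_sub].
Qed.

Lemma adjoin_lt n : n < x -> adjoin S x n -> S n.
Proof.
move=> lt_nx /adjoinP[[|k] le_kx Sk]; first by rewrite mul0n subn0 in Sk.
by move: le_kx; rewrite mulSn leqNgt (leq_trans lt_nx (leq_addr _ _)).
Qed.

Lemma adjoin_block_gap_closed m :
  block_gap_closed S m -> S x.-1 -> block_gap_closed (adjoin S x) m.
Proof.
move=> closed Sx1 z nTz z1_mod; apply/negP => /adjoinP[[|k] le_kx Sk].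
  have nSz : ~~ S z by apply: contra nTz; apply: adjoin_sub.
  by move: (closed z nSz z1_mod); rewrite mul0n subn0 in Sk; rewrite Sk.
move/negP: nTz; apply; apply/adjoinP; exists k; rewrite mulSn in le_kx Sk.
  by move: le_kx x0; move: (k * x); lia.
have -> : z - k * x = (z.+1 - (x + k * x)) + x.-1.
  by move: le_kx x0; move: (k * x); lia.
exact: numsgD.
Qed.

Variable M : nat.
Hypotheses (hM : is_M S M) (lt_Mx : M < x) (nSx : ~~ S x).

Lemma msg_adjoin_le y : y <= x -> adjoin S x y -> 0 < y -> ~ reducible S y ->
  is_msg (adjoin S x) y.
Proof.
move=> le_yx Ty y0 irr; split => //; split => // red; apply: irr.
by apply: reducible_below red => k lt_ky; apply: adjoin_lt; apply: leq_trans lt_ky le_yx.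
Qed.

Lemma msg_adjoin y : is_msg (adjoin S x) y <-> is_msg S y \/ y = x.
Proof.
split=> [[Ty [y0 irr]] | [[Sy [y0 irr]] | ->]].
- have /adjoinP[[|k] le_kx Sk] := Ty.
    left; rewrite mul0n subn0 in Sk; split=> //; split=> // red; apply: irr.
    exact: reducible_sub adjoin_sub red.
  right; apply/eqP; apply: contraPT irr => ne_yx irr; apply: irr.
  have le_xy : x <= y by apply: leq_trans le_kx; rewrite leq_pmull.
  exists (y - x), x; split; first by rewrite subn_gt0 ltn_neqAle eq_sym ne_yx.
  split=> //; split; last by split; [exact: adjoin_self | rewrite subnK].
  by apply/adjoinP; exists k; rewrite -?subnDA -?mulSn ?leq_subRL.
- apply: msg_adjoin_le => //; last exact: adjoin_sub.
  exact/ltnW/(leq_ltn_trans (hM.2 _ (conj Sy (conj y0 irr)))).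
- apply: msg_adjoin_le => //; first exact: adjoin_self.
  by move=> [a [b [a0 [b0 [Sa [Sb ab]]]]]]; move: nSx; rewrite -ab numsgD.
Qed.

End Adjoin.

Lemma adjoin_inj (S : pred nat) x y : numsg S ->
  ~~ S x -> ~~ S y -> adjoin S x =1 adjoin S y -> x = y.
Proof.
move=> hS; wlog lt_xy : x y / x < y.
  move=> wlog nSx nSy eq_adj; case: (ltngtP x y) => [lt_xy|lt_yx|//].
    exact: wlog.
  by symmetry; apply: wlog => // n; rewrite eq_adj.
move=> nSx nSy eq_adj.
have Tx : adjoin S y x by rewrite -eq_adj (adjoin_self hS (gap_gt0 hS nSx)).
by rewrite (adjoin_lt (gap_gt0 hS nSy) lt_xy Tx) in nSx.
Qed.

Section AdjoinChild.
Variables (m r : nat) (S : pred nat) (M x : nat).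
Hypotheses (hMA : in_MA m r S) (hM : is_M S M) (gen_x : child_generator S M x).

Let hS : numsg S := hMA.1.
Let hm : is_mult S m := hMA.2.1.
Let lt_Mx : M < x. Proof. by case/and3P: gen_x. Qed.
Let nSx : ~~ S x. Proof. by case/and3P: gen_x. Qed.
Let Sx1 : S x.-1. Proof. by case/and3P: gen_x. Qed.
Let x0 : 0 < x := leq_ltn_trans (leq0n M) lt_Mx.
Let msgT : forall y, is_msg (adjoin S x) y <-> is_msg S y \/ y = x :=
  msg_adjoin hS x0 hM lt_Mx nSx.

Let msg_lt y : is_msg S y -> y < x.
Proof. by move=> msg_y; apply: leq_ltn_trans lt_Mx; apply: hM.2. Qed.

Lemma is_mult_adjoin : is_mult (adjoin S x) m.
Proof.
split; first by apply/msgT; left; exact: hm.1.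
by move=> y /msgT[/hm.2 // | ->]; exact/ltnW/msg_lt/hm.1.
Qed.

Lemma is_r_adjoin : is_r (adjoin S x) r.
Proof.
have [msg_r [[m' [hm' lt_m'r]] r_min]] := hMA.2.2.1.
split; first by apply/msgT; left.
split; first by exists m; split; [exact: is_mult_adjoin | rewrite (is_mult_uniq hm hm')].
move=> y /msgT[msg_y lt_yr | -> lt_xr].
  by rewrite -(is_mult_uniq hm (r_min y msg_y lt_yr)); exact: is_mult_adjoin.
by move: (msg_lt msg_r); rewrite ltnNge ltnW.
Qed.

Lemma child_adjoin : child m r S (adjoin S x).
Proof.
have closed := MANS_block_gap_closed hS hm hMA.2.2.2.
split.
  split; first exact: numsg_adjoin.
  split; first exact: is_mult_adjoin.
  split; first exact: is_r_adjoin.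
  apply: block_gap_closed_MANS is_mult_adjoin _.
  exact: adjoin_block_gap_closed Sx1.
exists x; split.
  by split; [apply/msgT; right | move=> y /msgT[/msg_lt/ltnW | ->]].
move=> y; split=> [msg_y | [/msgT[] //]].
by split; [apply/msgT; left | move=> eq_yx; move: (msg_lt msg_y); rewrite eq_yx ltnn].
Qed.

End AdjoinChild.

Section ExtraTopGenerator.
Variables (S T : pred nat) (x : nat).
Hypotheses (hS : numsg S) (hT : numsg T) (hx : is_M T x).
Hypothesis msgST : forall y, is_msg S y <-> is_msg T y /\ y <> x.

Let x0 : 0 < x := hx.1.2.1.

Lemma extra_generator_sub n : S n -> T n.
Proof.
apply: msg_induction; [exact: numsg0 | exact: numsgD |].
by move=> y /msgST[[]].
Qed.

Lemma extra_generator_gt M : is_M S M -> M < x.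
Proof.
move=> hM; have [msg_TM ne_Mx] := (msgST M).1 hM.1.
by rewrite ltn_neqAle (hx.2 _ msg_TM) andbT; apply/eqP.
Qed.

Lemma extra_generator_gap : ~~ S x.
Proof.
apply/negP => Sx; have not_msg : ~ is_msg S x by move/msgST => [].
exact: hx.1.2.2 (reducible_sub extra_generator_sub (not_msg_reducible Sx x0 not_msg)).
Qed.

Lemma extra_generator_adjoin : T =1 adjoin S x.
Proof.
move=> n; apply/idP/idP.
  move: n; apply: msg_induction; [exact/adjoin_sub/numsg0 | exact: adjoinD |].
  move=> y msg_y; have [->|ne_yx] := eqVneq y x; first exact: adjoin_self.
  exact/adjoin_sub/(proj1 ((msgST y).2 (conj msg_y (elimN eqP ne_yx)))).
move=> /(adjoinP _ x0)[k le_kn Sk]; rewrite -(subnK le_kn).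
exact: (numsgD hT (extra_generator_sub Sk) (numsgMn hT k hx.1.1)).
Qed.

Lemma extra_generator_pred m : S m -> block_gap_closed T m -> S x.-1.
Proof.
move=> Sm closed; apply/negPn/negP => nSx1.
have nTx1 : ~~ T x.-1.
  by rewrite extra_generator_adjoin; apply: contra nSx1; apply: adjoin_lt; rewrite ?ltn_predL.
have x_mod : x.-1.+1 %% m != 0.
  rewrite prednK //; apply: contraNneq extra_generator_gap => x_mod.
  by rewrite (divn_eq x m) x_mod addn0 numsgMn.
by move: (closed _ nTx1 x_mod); rewrite prednK // hx.1.1.
Qed.

End ExtraTopGenerator.

Lemma child_adjoin_inv m r (S T : pred nat) M : in_MA m r S -> is_M S M ->
  child m r S T -> exists2 x, child_generator S M x & T =1 adjoin S x.
Proof.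
move=> [hS [[[Sm _] _] _]] hM [[hT [hmT [_ MANS_T]]] [x [hx msgST]]].
exists x; last exact: extra_generator_adjoin hS hT hx msgST.
have closed := MANS_block_gap_closed hT hmT MANS_T.
by rewrite /child_generator (extra_generator_gt hx msgST hM) (extra_generator_gap hT hx msgST)
  (extra_generator_pred hS hT hx msgST Sm closed).
Qed.

Lemma msg_le_frob_add (S : pred nat) a M F : S a -> 0 < a -> a < M ->
  is_msg S M -> is_F S F -> M <= F + a.
Proof.
move=> Sa a0 lt_aM [_ [_ irr]] hF.
suff nS : ~~ S (M - a) by rewrite addnC -leq_subLR (gap_le_frob hF nS).
apply/negP => SMa; apply: irr; exists (M - a), a.
by split; [rewrite subn_gt0 | split; [|split; [|split; [|rewrite subnK // ltnW]]]].
Qed.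

Lemma mult_lt_max m r (S : pred nat) M : in_MA m r S -> is_M S M -> m < M.
Proof.
move=> [_ [hm [[msg_r [[m' [hm' lt_m'r]] _]] _]]] [_ M_max].
by rewrite (is_mult_uniq hm hm') (leq_trans lt_m'r) ?M_max.
Qed.

Lemma divz_subn (a b d : nat) : 0 < d -> b %% d <= a %% d ->
  intdiv.divz (a%:Z - b%:Z) d%:Z = ((a %/ d)%:Z - (b %/ d)%:Z)%R.
Proof.
move=> d0 le_mod.
have -> : (a%:Z - b%:Z = ((a %/ d)%:Z - (b %/ d)%:Z) * d%:Z + (a %% d - b %% d)%:Z)%R.
  by rewrite {1}(divn_eq a d) {1}(divn_eq b d) -subzn // !PoszD !PoszM; ring.
rewrite intdiv.divzMDl ?intdiv.divz_small ?GRing.addr0 //; last by rewrite eqz_nat -lt0n.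
by rewrite ltz_nat (leq_ltn_trans (leq_subr _ _) (ltn_pmod _ d0)).
Qed.

Lemma has_exactly_children_blocks m r (S : pred nat) F M :
  in_MA m r S -> is_F S F -> is_M S M ->
  has_exactly_children m r S ((F %/ m).+1 - M %/ m).
Proof.
move=> hMA hF hM; have [hS [hm _]] := hMA; have [[Sm [m0 _]] _] := hm.
have closed := MANS_block_gap_closed hS hm hMA.2.2.2.
have gen (i : 'I_((F %/ m).+1 - M %/ m)) :
    exists x, child_generator S M x && (x %/ m == M %/ m + i).
  apply: (child_generator_exists hS Sm m0 hM.1.1 closed hF); move: (ltn_ord i) => /=.
  by move: (nat_of_ord i) => j; move: (M %/ m) (F %/ m); lia.
exists (fun i => adjoin S (xchoose (gen i))); split; [|split].
- by move=> i; have /andP[gi _] := xchooseP (gen i); exact: child_adjoin hMA hM gi.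
- move=> i j eq_adj; apply/val_inj/(@addnI (M %/ m)).
  have /andP[/and3P[_ nSi _] /eqP <-] := xchooseP (gen i).
  have /andP[/and3P[_ nSj _] /eqP <-] := xchooseP (gen j).
  by rewrite (adjoin_inj hS nSi nSj eq_adj).
- move=> T /(child_adjoin_inv hMA hM)[x gx eqT].
  have /andP[le_Mx le_xF] := child_generator_block m hF gx.
  have lt_i : x %/ m - M %/ m < (F %/ m).+1 - M %/ m.
    by move: le_Mx le_xF; move: (x %/ m) (M %/ m) (F %/ m); lia.
  exists (Ordinal lt_i) => n; have /andP[gy /eqP qy] := xchooseP (gen (Ordinal lt_i)).
  by rewrite eqT (child_generator_block_inj m0 closed gy gx) // qy /= subnKC.
Qed.

Theorem proposition4p15 (m r : nat) (S : pred nat) (F M : nat) :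
  1 < m -> 2 < r -> in_MA m r S -> is_F S F -> is_M S M ->
  exists k : nat,
    (k%:Z = intdiv.divz (F%:Z - M%:Z) m%:Z + 1)%R /\ has_exactly_children m r S k.
Proof.
move=> _ _ hMA hF hM.
have [hS [hm _]] := hMA; have [[Sm [m0 _]] _] := hm.
have closed := MANS_block_gap_closed hS hm hMA.2.2.2.
have le_MF := msg_le_frob_add Sm m0 (mult_lt_max hMA hM) hM.1 hF.
have le_mod := gap_modn_ge hS Sm m0 hM.1.1 closed hF.1 le_MF.
have le_q : M %/ m <= (F %/ m).+1.
  by rewrite (leq_trans (leq_div2r m le_MF)) // addnC -[X in X + F]mul1n divnMDl.
exists ((F %/ m).+1 - M %/ m); split; last exact: has_exactly_children_blocks.
by rewrite divz_subn //; move: le_q; move: (F %/ m) (M %/ m); lia.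
Qed.
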